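(* Let $X_n$ be the number of head abstractions of a uniformly random plain $\lambda$-term of size $n$. Then $X_n$ converges in law to a geometric distribution with parameter $\rho$: for every $h\ge0$, $\mathbb P(X_n=h)\to(1-\rho)\rho^h$ as $n\to\infty$. In particular $\mathbb E X_n\to \rho/(1-\rho)\approx 0.4196$.
   Context: Plain $\lambda$-terms in de Bruijn notation are generated by $T::=\underline{n}\mid \lambda T\mid (T\,T)$, with index $\underline n$ encoded as $\mathsf S^n\mathsf 0$. Size: $|\mathsf 0|=1$, $|\mathsf S\,\underline n|=|\underline n|+1$, $|M\,N|=|M|+|N|+1$, $|\lambda M|=|M|+1$. Every term can be written uniquely as $\lambda^h M$ with $M$ not an abstraction; $h$ is its number of head abstractions. $\rho\approx 0.29559774$ is the positive real root of $z^3+z^2+3z-1$ (the radius of convergence of the generating function of plain terms). *)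

From Stdlib Require Import Reals Lra Lia Arith List FinFun.
Import ListNotations.

(** Plain lambda-terms in de Bruijn notation: T ::= n | \lambda T | (T T). *)
Inductive term : Type :=
| Var : nat -> term          (* index n, encoded as S^n 0 *)
| Lam : term -> term
| App : term -> term -> term.

Fixpoint size (t : term) : nat :=
  match t with
  | Var n => S n
  | Lam M => S (size M)
  | App M N => S (size M + size N)
  end.

Fixpoint heads (t : term) : nat :=
  match t with
  | Lam M => S (heads M)
  | _ => 0
  end.

Fixpoint enum_le (n : nat) : list term :=
  match n with
  | 0 => []
  | S m =>
      map Var (seq 0 (S m))
      ++ map Lam (enum_le m)
      ++ flat_map (fun M => map (App M) (enum_le m)) (enum_le m)
  end.

Definition terms_of_size (n : nat) : list term :=
  filter (fun t => Nat.eqb (size t) n) (enum_le n).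

Definition nb_terms (n : nat) : nat := length (terms_of_size n).
Definition nb_terms_heads (n h : nat) : nat :=
  length (filter (fun t => Nat.eqb (heads t) h) (terms_of_size n)).

Definition prob_heads (n h : nat) : R :=
  (INR (nb_terms_heads n h) / INR (nb_terms n))%R.

(** E X_n = sum_{h=0}^{n} h P(X_n = h)  (X_n <= n always). *)
Definition exp_heads (n : nat) : R :=
  sum_f_R0 (fun h => (INR h * prob_heads n h)%R) n.

Lemma enum_le_complete : forall n t, size t <= n -> In t (enum_le n).
Proof.
  induction n as [|m IH]; intros t Ht.
  - destruct t; simpl in Ht; lia.
  - change (In t (map Var (seq 0 (S m)) ++ map Lam (enum_le m) ++ flat_map (fun M => map (App M) (enum_le m)) (enum_le m))).
    apply in_or_app. destruct t as [k|M|M N]; simpl in Ht.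
    + left. apply in_map. apply in_seq. lia.
    + right. apply in_or_app. left. apply in_map. apply IH. lia.
    + right. apply in_or_app. right. apply in_flat_map. exists M.
      split; [apply IH; lia|]. apply in_map. apply IH; lia.
Qed.

Lemma NoDup_flat_map_app (l : list term) :
  NoDup l -> NoDup (flat_map (fun M => map (App M) l) l).
Proof.
  intros Hl. assert (H : forall l', NoDup l' ->
    NoDup (flat_map (fun M => map (App M) l) l')).
  { induction l' as [|a l' IH]; intros Hl'; simpl; [constructor|].
    inversion Hl'; subst. apply NoDup_app.
    - apply FinFun.Injective_map_NoDup; [intros x y E; now inversion E|exact Hl].
    - now apply IH.
    - intros x Hx Hx'. apply in_map_iff in Hx as [y [<- _]].
      apply in_flat_map in Hx' as [z [Hz Hz']].
      apply in_map_iff in Hz' as [w [E _]]. inversion E; subst. contradiction. }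
  now apply H.
Qed.

Lemma enum_le_NoDup : forall n, NoDup (enum_le n).
Proof.
  induction n as [|m IH]; [constructor|].
  change (NoDup (map Var (seq 0 (S m)) ++ map Lam (enum_le m) ++ flat_map (fun M => map (App M) (enum_le m)) (enum_le m))).
  apply NoDup_app; [|apply NoDup_app|].
  - apply FinFun.Injective_map_NoDup; [intros x y E; now inversion E|apply seq_NoDup].
  - apply FinFun.Injective_map_NoDup; [intros x y E; now inversion E|exact IH].
  - now apply NoDup_flat_map_app.
  - intros x Hx Hx'. apply in_map_iff in Hx as [y [<- _]].
    apply in_flat_map in Hx' as [z [_ Hz']].
    apply in_map_iff in Hz' as [w [E _]]. discriminate.
  - intros x Hx Hx'. apply in_map_iff in Hx as [y [<- _]].
    apply in_app_or in Hx' as [H|H].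
    + apply in_map_iff in H as [w [E _]]. discriminate.
    + apply in_flat_map in H as [z [_ Hz']].
      apply in_map_iff in Hz' as [w [E _]]. discriminate.
Qed.

Lemma terms_of_size_spec : forall n t, In t (terms_of_size n) <-> size t = n.
Proof.
  intros n t. unfold terms_of_size. rewrite filter_In, Nat.eqb_eq.
  split; [tauto|]. intros H. split; [apply enum_le_complete; lia|exact H].
Qed.

Lemma terms_of_size_NoDup : forall n, NoDup (terms_of_size n).
Proof. intros n. apply NoDup_filter, enum_le_NoDup. Qed.

From Stdlib Require Import Reals Lra Lia List Permutation FinFun.

(* Removing the root constructor shows that the number T_n of terms of size n satisfies
   T_{n+1} = 1 + T_n + sum_{i<=n} T_i T_{n-i}, and stripping one head abstraction matches
   the terms of size n+1 with h+1 head abstractions with those of size n with h. Hence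
   P(X_{n+h+1} = h) = (T_{n+1} - T_n) / T_{n+h+1} and E X_{n+1} = (T_n / T_{n+1}) (1 + E X_n),
   so both limits follow once T_n / T_{n+1} -> rho.
   With D = 2 z T(z) + z - 1 the generating function satisfies (1 - z) D^2 = 1 - 3z - z^2 - z^3;
   differentiating gives the linear recurrence
   (n+6) T_{n+5} + (2n+9) T_{n+3} + T_{n+2} + (n+1) T_{n+1} = (4n+19) T_{n+4}.
   From it the ratios T_n / T_{n+1} decrease for n >= 1, and the recurrence forces their
   limit L to satisfy (1 - L)(1 - 3L - L^2 - L^3) = 0, i.e. L = rho. *)

Lemma NoDup_length_eq {A} (l1 l2 : list A) :
  NoDup l1 -> NoDup l2 -> (forall x, In x l1 <-> In x l2) -> length l1 = length l2.
Proof. intros H1 H2 H. apply Permutation_length, NoDup_Permutation; auto. Qed.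

Lemma NoDup_flat_map {A B} (f : A -> list B) (l : list A) :
  NoDup l -> (forall x, In x l -> NoDup (f x)) ->
  (forall x y z, In x l -> In y l -> In z (f x) -> In z (f y) -> x = y) ->
  NoDup (flat_map f l).
Proof.
  induction l as [|a l IH]; intros Hl Hf Hdisj; simpl; [constructor|].
  inversion Hl; subst. apply NoDup_app.
  - apply Hf; now left.
  - apply IH; auto.
    + intros x Hx; apply Hf; now right.
    + intros x y z Hx Hy; apply Hdisj; now right.
  - intros z Hz Hz'. apply in_flat_map in Hz' as [y [Hy Hzy]].
    assert (a = y) by (apply (Hdisj a y z); auto; [now left | now right]).
    subst; contradiction.
Qed.

(** The applications of size [S n]. *)
Definition apps_of_size (n : nat) : list term :=
  flat_map (fun i => flat_map (fun M => map (App M) (terms_of_size (n - i)))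
                              (terms_of_size i))
           (seq 0 (S n)).

Lemma in_apps_of_size n t :
  In t (apps_of_size n) <->
  match t with App M N => size M + size N = n | _ => False end.
Proof.
  unfold apps_of_size. rewrite in_flat_map. split.
  - intros [i [Hi Ht]]. apply in_seq in Hi.
    apply in_flat_map in Ht as [M [HM Ht]]. apply in_map_iff in Ht as [N [<- HN]].
    apply terms_of_size_spec in HM, HN. lia.
  - destruct t as [| |M N]; try contradiction. intros Hs.
    exists (size M). split; [apply in_seq; lia|].
    apply in_flat_map. exists M. split; [now apply terms_of_size_spec|].
    apply in_map, terms_of_size_spec. lia.
Qed.

Lemma apps_of_size_NoDup n : NoDup (apps_of_size n).
Proof.
  apply NoDup_flat_map; [apply seq_NoDup| |].
  - intros i _. apply NoDup_flat_map; [apply terms_of_size_NoDup| |].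
    + intros M _. apply Injective_map_NoDup; [|apply terms_of_size_NoDup].
      intros N N' E. now inversion E.
    + intros M M' z _ _ Hz Hz'.
      apply in_map_iff in Hz as [N [<- _]], Hz' as [N' [E _]]. now inversion E.
  - intros i j z _ _ Hz Hz'.
    apply in_flat_map in Hz as [M [HM Hz]], Hz' as [M' [HM' Hz']].
    apply in_map_iff in Hz as [N [<- _]], Hz' as [N' [E _]]. inversion E; subst.
    apply terms_of_size_spec in HM, HM'. congruence.
Qed.

Lemma length_apps_of_size n :
  length (apps_of_size n) =
  list_sum (map (fun i => nb_terms i * nb_terms (n - i)) (seq 0 (S n))).
Proof.
  unfold apps_of_size. rewrite length_flat_map. f_equal. apply map_ext. intros i.
  rewrite (flat_map_constant_length (c := nb_terms (n - i))); [reflexivity|].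
  intros M _. apply length_map.
Qed.

Lemma nb_terms_S n : nb_terms (S n) =
  1 + nb_terms n + list_sum (map (fun i => nb_terms i * nb_terms (n - i)) (seq 0 (S n))).
Proof.
  unfold nb_terms at 1.
  transitivity (length (Var n :: map Lam (terms_of_size n) ++ apps_of_size n)).
  - apply NoDup_length_eq; [apply terms_of_size_NoDup| |].
    + constructor.
      * rewrite in_app_iff, in_map_iff, in_apps_of_size. now intros [[M [E _]]|].
      * apply NoDup_app.
        -- apply Injective_map_NoDup; [intros M N E; now inversion E|apply terms_of_size_NoDup].
        -- apply apps_of_size_NoDup.
        -- intros t Ht. apply in_map_iff in Ht as [M [<- _]]. now rewrite in_apps_of_size.
    + intros t. rewrite terms_of_size_spec. simpl. rewrite in_app_iff, in_map_iff, in_apps_of_size.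
      setoid_rewrite terms_of_size_spec.
      destruct t as [k|M|M N]; simpl; split.
      * intros E. left. congruence.
      * intros [E|[[? [E _]]|[]]]; congruence.
      * intros E. right. left. exists M. split; [reflexivity|lia].
      * intros [E|[[M' [E HM]]|[]]]; [discriminate|]. inversion E; subst. lia.
      * intros E. right. right. lia.
      * intros [E|[[? [E _]]|HMN]]; [discriminate|discriminate|lia].
  - simpl. rewrite length_app, length_map, length_apps_of_size. reflexivity.
Qed.

Lemma nb_terms_heads_S n h : nb_terms_heads (S n) (S h) = nb_terms_heads n h.
Proof.
  unfold nb_terms_heads. rewrite <- (length_map Lam (filter _ (terms_of_size n))).
  apply NoDup_length_eq.
  - apply NoDup_filter, terms_of_size_NoDup.
  - apply Injective_map_NoDup; [intros M N E; now inversion E|].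
    apply NoDup_filter, terms_of_size_NoDup.
  - intros t. rewrite filter_In, in_map_iff, terms_of_size_spec, Nat.eqb_eq.
    setoid_rewrite filter_In. setoid_rewrite terms_of_size_spec. setoid_rewrite Nat.eqb_eq.
    split.
    + destruct t as [|M|]; simpl; intros [Hs Hh]; try discriminate.
      exists M. split; [reflexivity|lia].
    + intros [M [<- [Hs Hh]]]. simpl. lia.
Qed.

Lemma nb_terms_heads_0 n : nb_terms_heads (S n) 0 + nb_terms n = nb_terms (S n).
Proof.
  unfold nb_terms_heads, nb_terms. rewrite <- (length_map Lam (terms_of_size n)), <- length_app.
  apply NoDup_length_eq; [| apply terms_of_size_NoDup|].
  - apply NoDup_app.
    + apply NoDup_filter, terms_of_size_NoDup.
    + apply Injective_map_NoDup; [intros M N E; now inversion E|apply terms_of_size_NoDup].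
    + intros t Ht Ht'. apply in_map_iff in Ht' as [M [<- _]].
      apply filter_In in Ht as [_ Ht]. discriminate.
  - intros t. rewrite in_app_iff, filter_In, in_map_iff, terms_of_size_spec, Nat.eqb_eq.
    setoid_rewrite terms_of_size_spec. split.
    + intros [[Hs _]|[M [<- Hs]]]; simpl; lia.
    + destruct t as [k|M|M N]; simpl; intros Hs; auto.
      right. exists M. split; [reflexivity|lia].
Qed.

Lemma nb_terms_heads_add m h : nb_terms_heads (m + h) h = nb_terms_heads m 0.
Proof.
  induction h as [|h IH]; [now rewrite Nat.add_0_r|].
  rewrite Nat.add_succ_r, nb_terms_heads_S. exact IH.
Qed.

Open Scope R_scope.

Lemma Un_cv_const c : Un_cv (fun _ => c) c.
Proof. intros eps Heps. exists 0%nat. intros. unfold R_dist. rewrite Rminus_diag, Rabs_R0. lra. Qed.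

Lemma Un_cv_abs_sub (a : nat -> R) l : Un_cv (fun n => Rabs (a n - l)) 0 <-> Un_cv a l.
Proof.
  unfold Un_cv, R_dist. setoid_rewrite Rminus_0_r. setoid_rewrite Rabs_Rabsolu. reflexivity.
Qed.

Lemma Un_cv_contraction (e d : nat -> R) q : 0 <= q < 1 ->
  (forall n, 0 <= e n) -> (forall n, e (S n) <= q * e n + d n) -> Un_cv d 0 -> Un_cv e 0.
Proof.
  intros Hq He Hrec Hd eps Heps.
  destruct (Hd ((1 - q) * eps / 2)) as [N HN]; [apply Rdiv_lt_0_compat; nra|].
  assert (Hgeom : forall k, e (N + k)%nat <= q ^ k * e N + eps / 2).
  { induction k as [|k IH]; [rewrite Nat.add_0_r; simpl; lra|].
    specialize (HN (N + k)%nat ltac:(lia)). unfold R_dist in HN. rewrite Rminus_0_r in HN.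
    apply Rabs_def2 in HN. rewrite Nat.add_succ_r. simpl.
    pose proof (Hrec (N + k)%nat). nra. }
  destruct (pow_lt_1_zero q ltac:(rewrite Rabs_right; lra) (eps / (2 * (e N + 1))))
    as [K HK]; [pose proof (He N); apply Rdiv_lt_0_compat; lra|].
  exists (N + K)%nat. intros n Hn. unfold R_dist.
  rewrite Rminus_0_r, Rabs_right by (apply Rle_ge, He).
  replace n with (N + (n - N))%nat by lia.
  specialize (HK (n - N)%nat ltac:(lia)). rewrite Rabs_right in HK by (apply Rle_ge, pow_le; lra).
  assert (Hsmall : q ^ (n - N) * e N < eps / 2).
  { pose proof (He N). apply Rle_lt_trans with (eps / (2 * (e N + 1)) * e N).
    - apply Rmult_le_compat_r; lra.
    - apply (Rmult_lt_reg_r (2 * (e N + 1))); [lra|]. field_simplify; nra. }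
  pose proof (Hgeom (n - N)%nat). lra.
Qed.

Lemma Un_cv_affine_rec (x a : nat -> R) r : 0 <= r < 1 -> (forall n, 0 <= a n) ->
  Un_cv a r -> (forall n, x (S n) = a n * (1 + x n)) -> Un_cv x (r / (1 - r)).
Proof.
  intros Hr Ha0 Ha Hx. set (l := r / (1 - r)).
  assert (Hl : l = r * (1 + l)) by (unfold l; field; lra).
  assert (Hl0 : 0 <= l)
    by (unfold l; apply Rmult_le_pos; [lra|apply Rlt_le, Rinv_0_lt_compat; lra]).
  destruct (Ha ((1 - r) / 2)) as [N HN]; [lra|].
  apply (CV_shift _ N).
  assert (Herr : Un_cv (fun n => Rabs (a (n + N)%nat - r) * (1 + l)) 0).
  { rewrite <- (Rmult_0_l (1 + l)). apply CV_mult; [|apply Un_cv_const].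
    apply (Un_cv_abs_sub (fun n => a (n + N)%nat)), CV_shift', Ha. }
  apply (Un_cv_abs_sub (fun n => x (n + N)%nat)).
  apply (Un_cv_contraction _ (fun n => Rabs (a (n + N)%nat - r) * (1 + l)) ((1 + r) / 2));
    [lra|intros; apply Rabs_pos| |exact Herr].
  intros n. simpl. specialize (HN (n + N)%nat ltac:(lia)). unfold R_dist in HN.
  apply Rabs_def2 in HN. pose proof (Ha0 (n + N)%nat).
  rewrite Hx.
  replace (a (n + N)%nat * (1 + x (n + N)%nat) - l)
    with (a (n + N)%nat * (x (n + N)%nat - l) + (a (n + N)%nat - r) * (1 + l)) by lra.
  eapply Rle_trans; [apply Rabs_triang|].
  rewrite !Rabs_mult, (Rabs_right (a _)), (Rabs_right (1 + l)) by lra.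
  pose proof (Rabs_pos (x (n + N)%nat - l)). nra.
Qed.

Lemma Un_cv_eq0_of_scaled_bounded (f : nat -> R) l B :
  Un_cv f l -> (forall n, Rabs ((INR n + 1) * f n) <= B) -> l = 0.
Proof.
  intros Hf HB. destruct (Req_dec l 0) as [|Hl]; [assumption|exfalso].
  assert (Heps : 0 < Rabs l / 2) by (apply Rabs_pos_lt in Hl; lra).
  destruct (Hf _ Heps) as [N HN].
  destruct (INR_archimed (Rabs l / 2) (Rabs B) Heps) as [M HM].
  set (n := Nat.max N M).
  specialize (HN n ltac:(unfold n; lia)). unfold R_dist in HN.
  assert (Hfn : Rabs l / 2 < Rabs (f n)).
  { pose proof (Rabs_triang_inv l (f n)). rewrite Rabs_minus_sym in HN. lra. }
  pose proof (le_INR M n ltac:(unfold n; lia)). pose proof (pos_INR M).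
  specialize (HB n). rewrite Rabs_mult, (Rabs_right (INR n + 1)) in HB by lra.
  pose proof (Rle_abs B). pose proof (Rabs_pos (f n)). nra.
Qed.

Definition succ_ratio (T : nat -> nat) (n : nat) : R := INR (T n) / INR (T (S n)).

Lemma ratio_tail_cv (T : nat -> nat) rho h :
  (forall n, (0 < T (S n))%nat) -> Un_cv (succ_ratio T) rho ->
  Un_cv (fun n => INR (T (S n)) / INR (T (S n + h)%nat)) (rho ^ h).
Proof.
  intros Hpos Hu. assert (HposR : forall n, 0 < INR (T (S n))) by (intros; apply lt_0_INR, Hpos).
  induction h as [|h IH].
  - apply (Un_cv_ext (fun _ => 1)); [|apply Un_cv_const].
    intros n. rewrite Nat.add_0_r. field. apply Rgt_not_eq, HposR.
  - apply (Un_cv_ext (fun n => INR (T (S n)) / INR (T (S n + h)%nat) * succ_ratio T (n + S h))).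
    + intros n. unfold succ_ratio. replace (n + S h)%nat with (S (n + h)) by lia. simpl.
      rewrite Nat.add_succ_r.
      pose proof (HposR n). pose proof (HposR (n + h)%nat). pose proof (HposR (S (n + h))).
      field. lra.
    + simpl. rewrite Rmult_comm. apply CV_mult; [exact IH|apply CV_shift', Hu].
Qed.

Lemma cubic_root_unique x y : 0 <= x -> 0 <= y ->
  x ^ 3 + x ^ 2 + 3 * x - 1 = 0 -> y ^ 3 + y ^ 2 + 3 * y - 1 = 0 -> x = y.
Proof.
  intros Hx Hy Rx Ry.
  assert (E : (x - y) * (x * x + x * y + y * y + x + y + 3) =
    (x ^ 3 + x ^ 2 + 3 * x - 1) - (y ^ 3 + y ^ 2 + 3 * y - 1)) by ring.
  rewrite Rx, Ry, Rminus_diag in E.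
  apply Rmult_integral in E as [E|E]; nra.
Qed.

(** The two equations are [ratio_rec] at [p + 1] and at [p], with [x, a, b, c, d] the ratios
    at [p + 5, ..., p + 1]. *)
Lemma ratio_step_le (P x a b c d : R) : 0 <= P -> 0 < x -> 0 < a ->
  0 <= b -> 0 <= c -> a <= b -> b <= c -> c <= d -> d <= 1 / 2 ->
  P + 7 = x * ((4 * P + 23) - (2 * P + 11) * a - a * b - (P + 2) * a * b * c) ->
  P + 6 = a * ((4 * P + 19) - (2 * P + 9) * b - b * c - (P + 1) * b * c * d) ->
  x <= a.
Proof.
  set (A := (4 * P + 23) - (2 * P + 11) * a - a * b - (P + 2) * a * b * c).
  set (B := (4 * P + 19) - (2 * P + 9) * b - b * c - (P + 1) * b * c * d).
  intros HP Hx Ha Hb Hc Hab Hbc Hcd Hd HxA HaB.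
  assert (HA : 0 < A) by (apply (Rmult_lt_reg_l x); lra).
  assert (HB : 0 < B) by (apply (Rmult_lt_reg_l a); lra).
  assert (Hbc0 : 0 <= b * c <= 1 / 4) by (split; nra).
  assert (Hbcd0 : 0 <= b * c * d <= 1 / 8) by (split; nra).
  assert (Hkey : 0 < (P + 6) * A - (P + 7) * B).
  { replace ((P + 6) * A - (P + 7) * B) with
      ((P + 6) * ((2 * P + 11) * (b - a) + b * (c - a) + (P + 2) * (b * c) * (d - a))
       + (5 - 3 * b + b * c - 5 * (b * c * d))) by (unfold A, B; ring).
    assert (0 <= (2 * P + 11) * (b - a)) by nra.
    assert (0 <= b * (c - a)) by nra.
    assert (0 <= (P + 2) * (b * c) * (d - a)) by (apply Rmult_le_pos; nra).
    nra. }
  assert (Hdiff : (a - x) * (A * B) = (P + 6) * A - (P + 7) * B) by (rewrite HxA, HaB; ring).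
  assert (0 < A * B) by nra. nra.
Qed.

Section RatioLimit.

Variable T : nat -> nat.
Hypothesis T_pos : forall n, (0 < T (S n))%nat.
Hypothesis T_rec : forall n, ((n + 6) * T (n + 5) + (2 * n + 9) * T (n + 3) + T (n + 2)
  + (n + 1) * T (n + 1) = (4 * n + 19) * T (n + 4))%nat.
Hypothesis ratio_init :
  succ_ratio T 4 <= succ_ratio T 3 /\ succ_ratio T 3 <= succ_ratio T 2 /\
  succ_ratio T 2 <= succ_ratio T 1 /\ succ_ratio T 1 <= 1 / 2.

Lemma ratio_pos n : 0 < succ_ratio T (S n).
Proof. apply Rdiv_lt_0_compat; apply lt_0_INR, T_pos. Qed.

Lemma ratio_rec n :
  let u k := succ_ratio T (n + k) in
  INR n + 6 = (4 * INR n + 19) * u 4%nat - (2 * INR n + 9) * u 3%nat * u 4%nat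
    - u 2%nat * u 3%nat * u 4%nat - (INR n + 1) * u 1%nat * u 2%nat * u 3%nat * u 4%nat.
Proof.
  intros u. unfold u, succ_ratio.
  assert (Hpos : forall k, (1 <= k)%nat -> 0 < INR (T (n + k)%nat)).
  { intros k Hk. apply lt_0_INR. replace (n + k)%nat with (S (n + k - 1)) by lia. apply T_pos. }
  pose proof (Hpos 1%nat ltac:(lia)). pose proof (Hpos 2%nat ltac:(lia)).
  pose proof (Hpos 3%nat ltac:(lia)). pose proof (Hpos 4%nat ltac:(lia)).
  pose proof (Hpos 5%nat ltac:(lia)).
  rewrite <- !Nat.add_succ_r. simpl Nat.succ.
  pose proof (f_equal INR (T_rec n)) as E. rewrite !plus_INR, !mult_INR, !plus_INR, !mult_INR in E.
  simpl INR in E.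
  apply (Rmult_eq_reg_r (INR (T (n + 5)%nat))); [|lra].
  field_simplify; [lra|lra..].
Qed.

Lemma ratio_window p :
  succ_ratio T (p + 4) <= succ_ratio T (p + 3) /\ succ_ratio T (p + 3) <= succ_ratio T (p + 2) /\
  succ_ratio T (p + 2) <= succ_ratio T (p + 1) /\ succ_ratio T (p + 1) <= 1 / 2.
Proof.
  induction p as [|p (H43 & H32 & H21 & H1)]; [exact ratio_init|].
  pose proof (ratio_rec p) as Rp. pose proof (ratio_rec (S p)) as RSp. cbv zeta in Rp, RSp.
  rewrite S_INR in RSp.
  replace (S p + 1)%nat with (p + 2)%nat in * by lia.
  replace (S p + 2)%nat with (p + 3)%nat in * by lia.
  replace (S p + 3)%nat with (p + 4)%nat in * by lia.
  replace (S p + 4)%nat with (p + 5)%nat in * by lia.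
  repeat split; try lra.
  assert (Hpos : forall k, (1 <= k)%nat -> 0 < succ_ratio T (p + k)).
  { intros k Hk. replace (p + k)%nat with (S (p + k - 1)) by lia. apply ratio_pos. }
  pose proof (pos_INR p).
  apply (ratio_step_le (INR p) _ _
           (succ_ratio T (p + 3)) (succ_ratio T (p + 2)) (succ_ratio T (p + 1)));
    try (apply Hpos; lia); try (apply Rlt_le, Hpos; lia); try lra.
Qed.

Lemma ratio_S_decreasing n : succ_ratio T (S (S n)) <= succ_ratio T (S n).
Proof.
  destruct (ratio_window n) as (_ & _ & H & _).
  now replace (n + 2)%nat with (S (S n)) in H by lia; rewrite Nat.add_1_r in H.
Qed.

Lemma ratio_S_le_half n : succ_ratio T (S n) <= 1 / 2.
Proof. destruct (ratio_window n) as (_ & _ & _ & H). now rewrite Nat.add_1_r in H. Qed.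

Lemma ratio_limit_bounds L : Un_cv (succ_ratio T) L -> 0 <= L <= 1 / 2.
Proof.
  intros HL. apply (CV_shift' _ 1) in HL.
  split.
  - refine (Rle_cv_lim _ (Un_cv_const 0) HL).
    intros n. rewrite Nat.add_1_r. apply Rlt_le, ratio_pos.
  - refine (Rle_cv_lim _ HL (Un_cv_const (1 / 2))).
    intros n. rewrite Nat.add_1_r. apply ratio_S_le_half.
Qed.

Lemma ratio_limit_root L : Un_cv (succ_ratio T) L -> L ^ 3 + L ^ 2 + 3 * L - 1 = 0.
Proof.
  intros HL. pose proof (ratio_limit_bounds L HL) as HL01.
  set (u k n := succ_ratio T (n + k)).
  assert (Hu : forall k, Un_cv (u k) L) by (intros k; apply CV_shift', HL).
  (* [ratio_rec] gives [(n + 1) * phi n = -5 + 15 u4 - 7 u3 u4 - u2 u3 u4], which is bounded. *)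
  set (phi n := 1 - 4 * u 4%nat n + 2 * u 3%nat n * u 4%nat n
                + u 1%nat n * u 2%nat n * u 3%nat n * u 4%nat n).
  assert (Hphi : Un_cv phi (1 - 4 * L + 2 * L * L + L * L * L * L)).
  { unfold phi. apply CV_plus; [apply CV_plus; [apply CV_minus|]|].
    - apply Un_cv_const.
    - apply CV_mult; [apply Un_cv_const|apply Hu].
    - repeat apply CV_mult; apply Hu || apply Un_cv_const.
    - repeat apply CV_mult; apply Hu. }
  assert (Hbounded : forall n, Rabs ((INR n + 1) * phi n) <= 15).
  { intros n. pose proof (ratio_rec n) as Rn. cbv zeta in Rn.
    assert (Hu01 : forall k, (1 <= k)%nat -> 0 <= u k n <= 1 / 2).
    { intros k Hk. unfold u. replace (n + k)%nat with (S (n + k - 1)) by lia.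
      split; [apply Rlt_le, ratio_pos|apply ratio_S_le_half]. }
    destruct (Hu01 2%nat ltac:(lia)), (Hu01 3%nat ltac:(lia)), (Hu01 4%nat ltac:(lia)).
    assert (0 <= u 3%nat n * u 4%nat n <= 1 / 4) by (split; nra).
    assert (0 <= u 2%nat n * (u 3%nat n * u 4%nat n) <= 1 / 8) by (split; nra).
    unfold phi. apply Rabs_le. unfold u in *. split; nra. }
  pose proof (Un_cv_eq0_of_scaled_bounded phi _ 15 Hphi Hbounded) as Hpsi.
  assert (E : 1 - 4 * L + 2 * L * L + L * L * L * L
              = (1 - L) * - (L ^ 3 + L ^ 2 + 3 * L - 1)) by ring.
  rewrite E in Hpsi. apply Rmult_integral in Hpsi as [|]; lra.
Qed.

Lemma ratio_cv rho : 0 < rho -> rho ^ 3 + rho ^ 2 + 3 * rho - 1 = 0 -> Un_cv (succ_ratio T) rho.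
Proof.
  intros Hrho Hroot.
  destruct (decreasing_cv (fun n => succ_ratio T (S n))) as [L HL].
  - intros n. apply ratio_S_decreasing.
  - exists 0. intros x [n ->]. unfold opp_seq. pose proof (ratio_pos n). lra.
  - assert (Hu : Un_cv (succ_ratio T) L).
    { apply (CV_shift _ 1).
      exact (Un_cv_ext _ _ (fun n => f_equal _ (eq_sym (Nat.add_1_r n))) _ HL). }
    replace rho with L; [exact Hu|].
    pose proof (ratio_limit_bounds L Hu).
    apply cubic_root_unique; try lra. now apply ratio_limit_root.
Qed.

End RatioLimit.

Lemma nb_terms_pos n : (0 < nb_terms (S n))%nat.
Proof. rewrite nb_terms_S. lia. Qed.

Lemma nb_terms_ratio_init :
  succ_ratio nb_terms 4 <= succ_ratio nb_terms 3 /\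
  succ_ratio nb_terms 3 <= succ_ratio nb_terms 2 /\
  succ_ratio nb_terms 2 <= succ_ratio nb_terms 1 /\ succ_ratio nb_terms 1 <= 1 / 2.
Proof.
  assert (E1 : nb_terms 1 = 1%nat) by (vm_compute; reflexivity).
  assert (E2 : nb_terms 2 = 2%nat) by (vm_compute; reflexivity).
  assert (E3 : nb_terms 3 = 4%nat) by (vm_compute; reflexivity).
  assert (E4 : nb_terms 4 = 9%nat) by (vm_compute; reflexivity).
  assert (E5 : nb_terms 5 = 22%nat) by (vm_compute; reflexivity).
  unfold succ_ratio. rewrite E1, E2, E3, E4, E5. simpl. repeat split; lra.
Qed.

Lemma prob_heads_add n h : prob_heads (n + S h) h =
  (1 - succ_ratio nb_terms n) * (INR (nb_terms (S n)) / INR (nb_terms (S n + h))).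
Proof.
  unfold prob_heads, succ_ratio. rewrite <- Nat.add_succ_comm, nb_terms_heads_add.
  replace (INR (nb_terms_heads (S n) 0)) with (INR (nb_terms (S n)) - INR (nb_terms n))
    by (rewrite <- (nb_terms_heads_0 n), plus_INR; ring).
  pose proof (lt_0_INR _ (nb_terms_pos n)). pose proof (lt_0_INR _ (nb_terms_pos (n + h))).
  simpl. field. split; lra.
Qed.

Lemma prob_heads_cv rho h : Un_cv (succ_ratio nb_terms) rho ->
  Un_cv (fun n => prob_heads n h) ((1 - rho) * rho ^ h).
Proof.
  intros Hu. apply (CV_shift _ (S h)).
  apply (Un_cv_ext _ _ (fun n => eq_sym (prob_heads_add n h))).
  apply CV_mult; [apply CV_minus; [apply Un_cv_const|exact Hu]|].
  exact (ratio_tail_cv nb_terms rho h nb_terms_pos Hu).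
Qed.

Lemma sum_nb_terms_heads n : sum_f_R0 (fun h => INR (nb_terms_heads n h)) n = INR (nb_terms n).
Proof.
  induction n as [|n IH]; [reflexivity|].
  rewrite decomp_sum by lia. simpl pred.
  rewrite (sum_eq _ _ _ (fun h _ => f_equal INR (nb_terms_heads_S n h))), IH.
  rewrite <- (nb_terms_heads_0 n), plus_INR. reflexivity.
Qed.

Lemma heads_moment_S n :
  sum_f_R0 (fun h => INR h * INR (nb_terms_heads (S n) h)) (S n) =
  sum_f_R0 (fun h => INR h * INR (nb_terms_heads n h)) n + INR (nb_terms n).
Proof.
  rewrite decomp_sum by lia. simpl pred.
  rewrite (sum_eq _ (fun h => INR h * INR (nb_terms_heads n h) + INR (nb_terms_heads n h))).
  - rewrite plus_sum, sum_nb_terms_heads. simpl. ring.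
  - intros h _. rewrite nb_terms_heads_S, S_INR. ring.
Qed.

Lemma exp_heads_mul n :
  exp_heads n * INR (nb_terms n) = sum_f_R0 (fun h => INR h * INR (nb_terms_heads n h)) n.
Proof.
  destruct n as [|n]; [simpl; ring|].
  pose proof (lt_0_INR _ (nb_terms_pos n)).
  unfold exp_heads, prob_heads. rewrite Rmult_comm, scal_sum.
  apply sum_eq. intros h _. field. lra.
Qed.

Lemma exp_heads_S n : exp_heads (S n) = succ_ratio nb_terms n * (1 + exp_heads n).
Proof.
  pose proof (lt_0_INR _ (nb_terms_pos n)).
  apply (Rmult_eq_reg_r (INR (nb_terms (S n)))); [|lra].
  rewrite exp_heads_mul, heads_moment_S, <- exp_heads_mul. unfold succ_ratio. field. lra.
Qed.

Lemma exp_heads_cv rho : 0 <= rho < 1 -> Un_cv (succ_ratio nb_terms) rho ->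
  Un_cv exp_heads (rho / (1 - rho)).
Proof.
  intros Hrho Hu.
  apply (Un_cv_affine_rec _ (succ_ratio nb_terms) rho Hrho); [|exact Hu|exact exp_heads_S].
  intros n. unfold succ_ratio. apply Rmult_le_pos; [apply pos_INR|].
  apply Rlt_le, Rinv_0_lt_compat, lt_0_INR, nb_terms_pos.
Qed.

Close Scope R_scope.
From mathcomp Require Import all_boot all_algebra.
From mathcomp Require Import ring zify.
Import GRing.Theory.

Section TruncatedSeries.
Local Open Scope ring_scope.
Context {R : comNzRingType}.

Definition zero_mod_Xn (N : nat) (p : {poly R}) : Prop := forall i, (i < N)%N -> p`_i = 0.

Lemma zero_mod_XnD N p q : zero_mod_Xn N p -> zero_mod_Xn N q -> zero_mod_Xn N (p + q).
Proof. by move=> hp hq i hi; rewrite coefD hp // hq // addr0. Qed.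

Lemma zero_mod_XnN N p : zero_mod_Xn N p -> zero_mod_Xn N (- p).
Proof. by move=> hp i hi; rewrite coefN hp // oppr0. Qed.

Lemma zero_mod_XnMl N p q : zero_mod_Xn N p -> zero_mod_Xn N (q * p).
Proof.
move=> hp i hi; rewrite coefM big1 // => j _.
by rewrite hp ?mulr0 //; apply: leq_ltn_trans hi; apply: leq_subr.
Qed.

Lemma zero_mod_XnMr N p q : zero_mod_Xn N p -> zero_mod_Xn N (p * q).
Proof. by move=> hp; rewrite mulrC; apply: zero_mod_XnMl. Qed.

Lemma zero_mod_Xn_deriv N p : zero_mod_Xn N.+1 p -> zero_mod_Xn N p^`().
Proof. by move=> hp i hi; rewrite coef_deriv hp // mul0rn. Qed.

(** Differentiating [(1 - X) D^2 = L] and eliminating [D^2] gives a first-order linear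
    differential equation for [D]. *)
Lemma sqr_relation_deriv N (D L : {poly R}) :
  zero_mod_Xn N.+1 ((1 - 'X) * D ^+ 2 - L) ->
  zero_mod_Xn N ((1 - 'X) * L * D^`() *+ 2 - (L + (1 - 'X) * L^`()) * D).
Proof.
set G := _ - L => hG.
have eG' : G^`() = - D ^+ 2 + (1 - 'X) * (D * D^`() *+ 2) - L^`().
  by rewrite /G derivB derivM derivB derivX -polyC1 derivC polyC1 expr2 derivM; ring.
have -> : (1 - 'X) * L * D^`() *+ 2 - (L + (1 - 'X) * L^`()) * D =
          (1 - 'X) * D * G^`() + G * D - (1 - 'X) * G * D^`() *+ 2.
  by rewrite eG' /G; ring.
have hGN : zero_mod_Xn N G by move=> i hi; apply: hG; apply: ltnW.
apply: zero_mod_XnD; [apply: zero_mod_XnD|apply: zero_mod_XnN].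
- by apply/zero_mod_XnMl/zero_mod_Xn_deriv.
- exact: zero_mod_XnMr.
- by rewrite -mulr_natr; apply/zero_mod_XnMr/zero_mod_XnMr/zero_mod_XnMl.
Qed.

End TruncatedSeries.

Section GeneratingFunction.
Local Open Scope ring_scope.

Variable T : nat -> nat.
Hypothesis T0 : T 0%N = 0%N.
Hypothesis T_rec : forall n, T n.+1 = (1 + T n + \sum_(i < n.+1) T i * T (n - i))%N.

Definition gf_trunc (N : nat) : {poly int} := \poly_(i < N) (T i)%:Z.

Lemma coef_gf_trunc N i : (i < N)%N -> (gf_trunc N)`_i = (T i)%:Z.
Proof. by move=> hi; rewrite coef_poly hi. Qed.

(** The generating function [F] satisfies [X F^2 + (X - 1) F + X / (1 - X) = 0]; with
    [D = 2 X F + X - 1] this becomes [(1 - X) D^2 = 1 - 3 X - X^2 - X^3]. Below, [U] is the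
    truncation of [X / (1 - X)]. *)
Lemma gf_trunc_sqr_relation N :
  zero_mod_Xn N.+1 ((1 - 'X) * (('X * gf_trunc N.+1) *+ 2 + 'X - 1) ^+ 2
                    - (1 - 'X *+ 3 - 'X^2 - 'X^3)).
Proof.
set P := gf_trunc N.+1.
pose U : {poly int} := \poly_(i < N.+1) ((i != 0%N)%:R).
have cU j : (j < N.+1)%N -> U`_j = (j != 0%N)%:R by move=> hj; rewrite coef_poly hj.
have hE : zero_mod_Xn N.+1 ('X * P ^+ 2 + ('X - 1) * P + U).
  move=> i hi; rewrite mulrBl mul1r !coefD coefN !coefXM cU //.
  case: i hi => [|k] hk /=; first by rewrite coef_gf_trunc // T0; lia.
  rewrite coef_gf_trunc; last exact: ltnW.
  rewrite expr2 coefM coef_gf_trunc // T_rec.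
  have -> : \sum_(j < k.+1) P`_j * P`_(k - j) = ((\sum_(j < k.+1) T j * T (k - j))%N)%:Z.
    rewrite (big_morph Posz PoszD (erefl _)); apply: eq_bigr => j _.
    by rewrite PoszM !coef_gf_trunc //; have := ltn_ord j; lia.
  rewrite !PoszD; lia.
have hV : zero_mod_Xn N.+1 ('X - (1 - 'X) * U).
  move=> i hi; rewrite mulrBl mul1r !(coefB, coefX, coefXM) cU //.
  case: i hi => [|[|k]] hk //=; first by rewrite cU //= subr0 subrr.
  rewrite cU /=; lia.
have -> : (1 - 'X) * (('X * P) *+ 2 + 'X - 1) ^+ 2 - (1 - 'X *+ 3 - 'X^2 - 'X^3) =
          'X *+ 4 * ((1 - 'X) * ('X * P ^+ 2 + ('X - 1) * P + U) + ('X - (1 - 'X) * U)).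
  by ring.
by apply/zero_mod_XnMl/zero_mod_XnD => //; apply: zero_mod_XnMl.
Qed.

Lemma P_rec_of_convolution_rec n :
  ((n + 6) * T (n + 5) + (2 * n + 9) * T (n + 3) + T (n + 2) + (n + 1) * T (n + 1)
   = (4 * n + 19) * T (n + 4))%N.
Proof.
set P := gf_trunc n.+4.+3; set dP := P^`().
have := sqr_relation_deriv _ _ _ (gf_trunc_sqr_relation n.+4.+2).
rewrite -/P => hH.
pose K := P *+ 2 - ('X * P) *+ 6 + ('X^2 * P) *+ 6 + ('X^3 * P) *+ 2 + ('X * dP) *+ 2
   - ('X^2 * dP) *+ 8 + ('X^3 * dP) *+ 4 + ('X^5 * dP) *+ 2 - 'X *+ 4 + 'X^2 *+ 2 + 'X^3 *+ 2.
have eDl : (1 - 'X *+ 3 - 'X^2 - 'X^3 : {poly int})^`() = - 'X^2 *+ 3 - 'X *+ 2 - 3%:R.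
  by rewrite !derivB !derivXn derivMn derivX -polyC1 derivC polyC1 /=; ring.
have eDt : (('X * P) *+ 2 + 'X - 1)^`() = (P + 'X * dP) *+ 2 + 1.
  by rewrite derivB derivD derivMn derivM derivX -polyC1 derivC polyC1 /dP; ring.
rewrite eDl eDt in hH.
have hK : zero_mod_Xn n.+4.+2 K.
  move=> i hi; have /eqP := hH i hi.
  have -> : (1 - 'X) * (1 - 'X *+ 3 - 'X^2 - 'X^3) * ((P + 'X * dP) *+ 2 + 1) *+ 2 -
    (1 - 'X *+ 3 - 'X^2 - 'X^3 + (1 - 'X) * (- 'X^2 *+ 3 - 'X *+ 2 - 3%:R)) *
    (('X * P) *+ 2 + 'X - 1) = K *+ 2 by rewrite /K; ring.
  by rewrite coefMn Num.Theory.mulrn_eq0 /= => /eqP.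
have := hK n.+4.+1 (ltnSn _).
rewrite /K !(coefD, coefN, coefMn, coefXM, coefXnM, coefX, coefXn) /= /dP !coef_deriv.
have -> : (n.+4.+1 - 2 = n.+3)%N by lia.
have -> : (n.+4.+1 - 3 = n.+2)%N by lia.
have -> : (n.+4.+1 - 5 = n)%N by lia.
rewrite !coef_gf_trunc ?addnS ?addn0; lia.
Qed.

End GeneratingFunction.

Lemma list_sum_seq_big (f : nat -> nat) a k :
  list_sum (List.map f (List.seq a k)) = (\sum_(i < k) f (a + i))%N.
Proof.
elim: k a => [|k IH] a; first by rewrite big_ord0.
rewrite big_ord_recl /= IH addn0.
by congr (_ + _)%N; apply: eq_bigr => i _; congr f; rewrite /bump /=; lia.
Qed.

Lemma nb_terms_P_rec n :
  ((n + 6) * nb_terms (n + 5) + (2 * n + 9) * nb_terms (n + 3) + nb_terms (n + 2)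
   + (n + 1) * nb_terms (n + 1) = (4 * n + 19) * nb_terms (n + 4))%N.
Proof.
apply: P_rec_of_convolution_rec => [//|m].
by rewrite nb_terms_S (list_sum_seq_big (fun i => nb_terms i * nb_terms (m - i))%N).
Qed.

Open Scope R_scope.

Theorem mainTheorem4 (rho : R) (Hrho_pos : 0 < rho)
  (Hrho_root : rho ^ 3 + rho ^ 2 + 3 * rho - 1 = 0) :
  (forall h : nat, Un_cv (fun n => prob_heads n h) ((1 - rho) * rho ^ h)) /\
  Un_cv exp_heads (rho / (1 - rho)).
Proof.
  have Hratio : Un_cv (succ_ratio nb_terms) rho :=
    ratio_cv nb_terms nb_terms_pos nb_terms_P_rec nb_terms_ratio_init rho Hrho_pos Hrho_root.
  have Hrho1 : rho < 1 by nra.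
  split.
  - move=> h. exact: prob_heads_cv.
  - apply: exp_heads_cv => //. lra.
Qed.
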